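(* Let $q\in(0,1)$, let $\alpha,p,j\ge0$ be integers, and let $b_n=q^n[n+\alpha+1]_q+q^{n+\alpha}[n]_q$ and $\lambda_n=q^{2n+\alpha-1}[n]_q[n+\alpha]_q$. Then $$\sum_{\omega\in\mathrm{Mot}_{p,j,j}}\mathrm{wt}_{b,\lambda}(\omega)=\sum_{M\in M^{(\alpha)}_{p,j}(p)}q^{\mathrm{cr}(M)}.$$
   Context: $[n]_q=\frac{1-q^n}{1-q}$. Motzkin paths: a Motzkin path is a sequence $(s_0,\dots,s_n)$ of points $s_i=(x_i,y_i)\in\mathbb{Z}^2$ with all $y_i\ge0$ such that each step $(s_i,s_{i+1})$ is an East step ($+(1,0)$), a North-East step ($+(1,1)$) or a South-East step ($+(1,-1)$); the step has height $k$ if $y_i=k$. $\mathrm{Mot}_{n,k,l}$ is the set of Motzkin paths from $(0,k)$ to $(n,l)$. An East step of height $k$ has weight $b_k$, a North-East step weight $1$, a South-East step of height $k$ weight $\lambda_k$; $\mathrm{wt}_{b,\lambda}(\omega)$ is the product of the step weights. Bipartite matchings: for integers $n,j,\alpha\ge0$, let $T_-=\{-\alpha-j,\dots,-1\}$, $T_+=\{1,\dots,n\}$ (top row), $B_-=\{-\tilde j,\dots,-\tilde 1\}$, $B_+=\{\tilde1,\dots,\tilde n\}$ (bottom row; $\tilde m$ is a formal copy of the integer $m$, and bottom vertices are compared via these integers). A bipartite matching is a set partition of $T_-\cup T_+\cup B_-\cup B_+$ into singletons (isolated vertices) and blocks $\{a,\tilde b\}$ with $a$ top, $\tilde b$ bottom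 (edges, written $(a,\tilde b)$). $M^{(\alpha)}_{n,j}$ is the set of such matchings with no edge between $T_-$ and $B_-$; $M^{(\alpha)}_{n,j}(l)$ its subset with exactly $l$ edges. The crossing number $\mathrm{cr}(M)$ is the total number of: (C1) unordered pairs of edges $(a,\tilde b),(c,\tilde d)$ with $a<c$ and $d<b$; (C2) pairs of an edge $(a,\tilde b)$ and an isolated top vertex $c$ with $c<a$; (C3) pairs of an edge $(a,\tilde b)$ and an isolated bottom vertex $\tilde d$ with $d<b$. *)

From mathcomp Require Import all_boot all_order all_algebra.
Set Implicit Arguments. Unset Strict Implicit. Unset Printing Implicit Defensive.
Import Order.TTheory GRing.Theory Num.Theory.
Local Open Scope ring_scope.

Definition qint (R : fieldType) (q : R) (n : nat) : R := (1 - q ^+ n) / (1 - q).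

(* A step is an element of 'I_3 : 0 = South-East, 1 = East, 2 = North-East.
   A path of length n is an n.-tuple of steps; it is determined by its starting
   height k, so Mot_{n,k,l} is the set of step sequences of length n that never
   go below height 0 starting from height k and end at height l. *)
Fixpoint motz_ok (k l : nat) (s : seq 'I_3) : bool :=
  match s with
  | [::] => k == l
  | st :: s' =>
      if val st == 0%N then (0 < k)%N && motz_ok k.-1 l s'
      else if val st == 1%N then motz_ok k l s'
      else motz_ok k.+1 l s'
  end.

Fixpoint motz_wt (R : ringType) (b lam : nat -> R) (k : nat) (s : seq 'I_3) : R :=
  match s with
  | [::] => 1
  | st :: s' =>
      if val st == 0%N then lam k * motz_wt b lam k.-1 s'
      else if val st == 1%N then b k * motz_wt b lam k s'
      else motz_wt b lam k.+1 s'
  end.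

Definition motzkin_sum (R : ringType) (b lam : nat -> R) (n k l : nat) : R :=
  \sum_(t : n.-tuple 'I_3 | motz_ok k l t) motz_wt b lam k t.

(* Top row T_- ∪ T_+ = {-a-j,...,-1} ∪ {1,...,n} indexed by 'I_(a+j+n);
   bottom row B_- ∪ B_+ = {-j,...,-1} ∪ {1,...,n} indexed by 'I_(j+n).
   The integer labels are given by top_lbl / bot_lbl. *)
Definition top_lbl (a j : nat) (i : nat) : int :=
  if (i < a + j)%N then (i%:Z - (a + j)%:Z)%R else (i%:Z - (a + j)%:Z + 1)%R.
Definition bot_lbl (j : nat) (i : nat) : int :=
  if (i < j)%N then (i%:Z - j%:Z)%R else (i%:Z - j%:Z + 1)%R.

Section Matchings.
Variables (a n j : nat).
Definition topT := 'I_(a + j + n).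
Definition botT := 'I_(j + n).
Definition edgeT := (topT * botT)%type.

Definition top_neg (x : topT) : bool := (top_lbl a j x < 0)%R.
Definition bot_neg (y : botT) : bool := (bot_lbl j y < 0)%R.

Definition is_matching (M : {set edgeT}) : bool :=
  [forall e1 in M, forall e2 in M,
     ((e1.1 == e2.1) || (e1.2 == e2.2)) ==> (e1 == e2)] &&
  [forall e in M, ~~ (top_neg e.1 && bot_neg e.2)].

Definition top_isolated (M : {set edgeT}) (x : topT) : bool :=
  [forall e in M, e.1 != x].
Definition bot_isolated (M : {set edgeT}) (y : botT) : bool :=
  [forall e in M, e.2 != y].

Definition cr1 (M : {set edgeT}) : nat :=
  #|[set p : edgeT * edgeT | (p.1 \in M) && (p.2 \in M) &&
       (top_lbl a j p.1.1 < top_lbl a j p.2.1)%R &&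
       (bot_lbl j p.2.2 < bot_lbl j p.1.2)%R]|.
Definition cr2 (M : {set edgeT}) : nat :=
  #|[set p : edgeT * topT | (p.1 \in M) && top_isolated M p.2 &&
       (top_lbl a j p.2 < top_lbl a j p.1.1)%R]|.
Definition cr3 (M : {set edgeT}) : nat :=
  #|[set p : edgeT * botT | (p.1 \in M) && bot_isolated M p.2 &&
       (bot_lbl j p.2 < bot_lbl j p.1.2)%R]|.
Definition crossing (M : {set edgeT}) : nat := (cr1 M + cr2 M + cr3 M)%N.

Definition matching_sum (R : ringType) (q : R) (l : nat) : R :=
  \sum_(M : {set edgeT} | is_matching M && (#|M| == l)) q ^+ crossing M.
End Matchings.

From mathcomp Require Import all_boot all_order all_algebra.
From mathcomp Require Import zify ring.
Import Order.TTheory GRing.Theory Num.Theory.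
Set Implicit Arguments. Unset Strict Implicit. Unset Printing Implicit Defensive.

(* Write F(T, B, k) for the q-count of matchings with k edges between T top
   and B bottom vertices.  Adding a new rightmost top vertex either leaves it
   isolated, which changes no crossing, or joins it to one of the B - k isolated
   bottom vertices: the new edge crosses the T - k isolated tops on its left,
   and if i isolated bottoms lie left of its endpoint it gains i crossings of
   type C3, while its C1 crossings are exactly the C3 crossings lost because
   that bottom is no longer isolated.  Summing over i gives
     F(T+1, B, k+1) = F(T, B, k+1) + q^(T-k) [B-k]_q F(T, B, k),
   and the same recursion with top and bottom exchanged.  Adding one top and
   then one bottom vertex, and reading the number of isolated bottom vertices
   as the height, the composite recursion is the last-step recursion of
   weighted Motzkin paths: b_l and lambda_(l+1) collect the ways of adding one,
   resp. two, edges.  No edge joins T_- to B_-, which matches the empty path at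
   height j. *)

Section MotzkinRecursion.
Local Open Scope ring_scope.
Variables (R : comNzRingType) (b lam : nat -> R).

Fixpoint motzkin (n k l : nat) : R :=
  match n with
  | 0 => (k == l)%:R
  | n.+1 => (if (0 < k)%N then lam k * motzkin n k.-1 l else 0)
            + b k * motzkin n k l + motzkin n k.+1 l
  end.

Lemma motzkin_sumE n k l : motzkin_sum b lam n k l = motzkin n k l.
Proof.
elim: n k => [|n IHn] k.
  rewrite /motzkin_sum big_mkcond (big_pred1 [tuple]) => [|t]; last exact/esym/eqP/tuple0.
  by rewrite /=; case: eqP.
pose cons_tuple (st : 'I_3 * n.-tuple 'I_3) := [tuple of st.1 :: st.2].
rewrite /motzkin_sum big_mkcond (reindex cons_tuple) /=; last first.
  exists (fun t : n.+1.-tuple 'I_3 => (thead t, [tuple of behead t])).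
    by move=> [st t] _; congr (_, _); apply: val_inj.
  by move=> t _; apply: val_inj; case: t => -[].
rewrite -(pair_bigA _ (fun st t => if motz_ok k l (cons_tuple (st, t))
  then motz_wt b lam k (cons_tuple (st, t)) else 0)) /=.
rewrite !big_ord_recl big_ord0 addr0 /= -!IHn /motzkin_sum !big_mkcond /=.
rewrite addrA; congr (_ + _ + _).
- case: k => [|k] /=; first by rewrite big1.
  by rewrite mulr_sumr [RHS]big_mkcond; apply: eq_bigr => t _; case: ifP; rewrite ?mulr0.
- by rewrite mulr_sumr [RHS]big_mkcond; apply: eq_bigr => t _; case: ifP; rewrite ?mulr0.
- by rewrite [RHS]big_mkcond.
Qed.

Lemma motzkinS n k l : motzkin n.+1 k l =
  (if (0 < k)%N then lam k * motzkin n k.-1 l else 0)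
  + b k * motzkin n k l + motzkin n k.+1 l.
Proof. by []. Qed.

Lemma mul_eqn_natr (f : nat -> R) x y : f x * (x == y)%:R = f y * (x == y)%:R.
Proof. by have [->|] := eqVneq x y; rewrite ?mulr0. Qed.

Lemma motzkinSr n k l : motzkin n.+1 k l =
  (if (0 < l)%N then motzkin n k l.-1 else 0) + b l * motzkin n k l
  + lam l.+1 * motzkin n k l.+1.
Proof.
elim: n k => [|n IHn] k.
  case: k => [|k]; case: l => [|l]; rewrite /= ?eqSS; try ring.
    by rewrite (mul_eqn_natr (fun i => lam i.+1) k 0); ring.
  rewrite (mul_eqn_natr (fun i => lam i.+1) k l.+1).
  by rewrite (mul_eqn_natr (fun i => b i.+1) k l); ring.
rewrite [LHS]motzkinS ![in LHS]IHn ![in RHS]motzkinS {IHn}.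
by case: k => [|k]; case: l => [|l] /=; ring.
Qed.

Lemma motzkin_out_of_reach n k l : (n + k < l)%N -> motzkin n k l = 0.
Proof.
elim: n k => [|n IHn] k klt /=; first by rewrite ltn_eqF.
by rewrite !IHn ?mulr0 ?if_same ?addr0 //; lia.
Qed.
End MotzkinRecursion.

Lemma sum_nat_boolE (I : finType) (P : pred I) : \sum_i P i = #|P|.
Proof.
rewrite -sum1_card [RHS]big_mkcond; apply: eq_bigr => i _.
by rewrite unfold_in; case: (P i).
Qed.

Lemma forall_inU1 (T : finType) (a : T) (A : {set T}) (P : pred T) :
  [forall x in a |: A, P x] = P a && [forall x in A, P x].
Proof.
apply/forall_inP/andP => [PaA|[Pa /forall_inP PA] x].
  split; first by apply: PaA; rewrite setU11.
  by apply/forall_inP => x xA; apply: PaA; rewrite setU1r.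
by rewrite in_setU1 => /predU1P [->|/PA].
Qed.

Lemma forall_in_imset (aT rT : finType) (f : aT -> rT) (A : {set aT}) (P : pred rT) :
  [forall y in f @: A, P y] = [forall x in A, P (f x)].
Proof.
apply/forall_inP/forall_inP => [PfA x xA|PfA _ /imsetP [x xA ->]]; last exact: PfA.
by apply: PfA; rewrite imset_f.
Qed.

Lemma big_option (R : nmodType) (I : finType) (F : option I -> R) :
  (\sum_o F o = F None + \sum_i F (Some i))%R.
Proof.
rewrite (bigD1 None) //= (reindex_omap Some id) => [|[]//].
by under eq_bigl do rewrite eqxx.
Qed.

Lemma big_pair_cond (R : nmodType) (I J : finType) (P : pred (I * J)) (F : I * J -> R) :
  (\sum_(p | P p) F p = \sum_i \sum_j if P (i, j) then F (i, j) else 0)%R.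
Proof. by rewrite pair_bigA big_mkcond; apply: eq_bigr => -[]. Qed.

Section QCount.
Local Open Scope ring_scope.
Variables (R : fieldType) (q : R).
Hypothesis q_neq1 : q != 1.

Lemma qintS n : qint q n.+1 = qint q n + q ^+ n.
Proof.
have q1_neq0 : 1 - q != 0 by rewrite subr_eq0 eq_sym.
by rewrite /qint exprS; field.
Qed.

Lemma sum_qpow_rank B (S : pred 'I_B) :
  \sum_(d | S d) q ^+ (\sum_y (S y && (y < d)))%N = qint q #|S|.
Proof.
elim: B S => [|B IHB] S.
  by rewrite big_ord0 (eq_card0 (A := S)) => [|[]//]; rewrite /qint expr0 subrr mul0r.
pose S' (y : 'I_B) := S (widen_ord (leqnSn B) y).
have rank_widen d : (\sum_(y < B.+1) (S y && (y < widen_ord (leqnSn B) d)) =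
                     \sum_y (S' y && (y < d)))%N.
  by rewrite big_ord_recr /= ltnNge (ltnW (ltn_ord d)) andbF addn0.
have rank_max : (\sum_(y < B.+1) (S y && (y < @ord_max B)))%N = #|S'|.
  rewrite big_ord_recr /= ltnn andbF addn0 -sum_nat_boolE.
  by under eq_bigr do rewrite ltn_ord andbT.
have card_S : #|S| = (#|S'| + S ord_max)%N by rewrite -!sum_nat_boolE big_ord_recr.
rewrite big_mkcond big_ord_recr /= -big_mkcond /=.
under eq_bigr do rewrite rank_widen.
rewrite IHB rank_max card_S; case: (S ord_max); rewrite ?addr0 ?addn0 //.
by rewrite addn1 qintS.
Qed.
End QCount.

Lemma forall_in_neq_imset (aT rT : finType) (f : aT -> rT) (A : {pred aT}) z :
  [forall x in A, f x != z] = (z \notin f @: A).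
Proof.
apply/forall_inP/negP => [neqA /imsetP [x xA zfx]|notin x xA].
  by have := neqA x xA; rewrite zfx eqxx.
by apply: contra_not_neq notin => <-; rewrite imset_f.
Qed.

Lemma sum_notin_imset (aT rT : finType) (f : aT -> rT) (A : {set aT}) :
  {in A &, injective f} -> \sum_z (z \notin f @: A) = #|rT| - #|A|.
Proof.
move=> injf; rewrite sum_nat_boolE -(card_in_imset injf) -(cardsC (f @: A)) addKn.
by apply: eq_card => z; rewrite !inE.
Qed.

(* Tops are 'I_T and bottoms 'I_B, ordered as their labels; edges between the
   first tn tops and the first bn bottoms (the negative vertices) are forbidden. *)
Section Matchings.
Variables (tn bn : nat).

Section Statistics.
Variables (T B : nat).
Implicit Types (M : {set 'I_T * 'I_B}) (x : 'I_T) (y : 'I_B).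

Definition matchingb M :=
  [forall e1 in M, forall e2 in M, ((e1.1 == e2.1) || (e1.2 == e2.2)) ==> (e1 == e2)] &&
  [forall e in M, ~~ ((e.1 < tn) && (e.2 < bn))].

Definition top_free M x := [forall e in M, e.1 != x].
Definition bot_free M y := [forall e in M, e.2 != y].

Definition cross_edges M :=
  \sum_(e1 in M) \sum_(e2 in M) ((e1.1 < e2.1) && (e2.2 < e1.2)).
Definition cross_top M := \sum_(e in M) \sum_x (top_free M x && (x < e.1)).
Definition cross_bot M := \sum_(e in M) \sum_y (bot_free M y && (y < e.2)).
Definition crossings M := cross_edges M + cross_top M + cross_bot M.

Lemma matchingP M : reflect
  ({in M &, forall e1 e2 : 'I_T * 'I_B, e1.1 = e2.1 \/ e1.2 = e2.2 -> e1 = e2} /\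
   {in M, forall e : 'I_T * 'I_B, ~~ ((e.1 < tn) && (e.2 < bn))}) (matchingb M).
Proof.
apply: (iffP andP) => [[/forall_inP uniqM /forall_inP freeM]|[uniqM freeM]]; split => //.
- move=> e1 e2 /uniqM /forall_inP uniq1 /uniq1 /implyP uniq12 shared.
  by apply/eqP/uniq12; case: shared => ->; rewrite eqxx ?orbT.
- apply/forall_inP => e1 e1M; apply/forall_inP => e2 e2M; apply/implyP.
  by move=> /orP shared; apply/eqP/uniqM => //; case: shared => /eqP; [left|right].
- exact/forall_inP.
Qed.

Lemma sum_top_free M : matchingb M -> \sum_x top_free M x = T - #|M|.
Proof.
move=> /matchingP [uniqM _]; under eq_bigr do rewrite /top_free (forall_in_neq_imset fst).
by rewrite sum_notin_imset ?card_ord // => e1 e2 e1M e2M e12; apply: uniqM; auto.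
Qed.

Lemma sum_bot_free M : matchingb M -> \sum_y bot_free M y = B - #|M|.
Proof.
move=> /matchingP [uniqM _]; under eq_bigr do rewrite /bot_free (forall_in_neq_imset snd).
by rewrite sum_notin_imset ?card_ord // => e1 e2 e1M e2M e12; apply: uniqM; auto.
Qed.

Lemma card_matching_le M : matchingb M -> #|M| <= B.
Proof.
move=> /matchingP [uniqM _].
rewrite -(@card_in_imset _ _ snd) => [|e1 e2 e1M e2M e12]; last by apply: uniqM; auto.
by rewrite -[leqRHS]card_ord max_card.
Qed.
End Statistics.

Section TopExtension.
Variables (T B : nat).
Hypothesis tn_le_T : tn <= T.
Implicit Types (N : {set 'I_T * 'I_B}) (M : {set 'I_T.+1 * 'I_B}).

Definition lift_edge (e : 'I_T * 'I_B) : 'I_T.+1 * 'I_B := (lift ord_max e.1, e.2).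

(* A matching on T.+1 tops is a matching on the first T tops together with the
   partner of the new top [ord_max], if any. *)
Definition extend_top N (o : option 'I_B) :=
  if o is Some d then (ord_max, d) |: (lift_edge @: N) else lift_edge @: N.
Definition restrict_top M := [set e | lift_edge e \in M].
Definition top_partner M := [pick d | (ord_max, d) \in M].

Lemma lift_edge_inj : injective lift_edge.
Proof. by move=> [x y] [x' y'] /eqP; rewrite xpair_eqE (inj_eq lift_inj) -xpair_eqE => /eqP. Qed.

Lemma lift_edge_neq_max e d : (lift_edge e == (ord_max, d)) = false.
Proof. by rewrite xpair_eqE lift_eqF. Qed.

Lemma max_notin_lift N d : (ord_max, d) \notin lift_edge @: N.
Proof. by apply/imsetP => -[e _ /esym/eqP]; rewrite lift_edge_neq_max. Qed.

Lemma mem_extend_lift N o e : (lift_edge e \in extend_top N o) = (e \in N).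
Proof.
by case: o => [d|]; rewrite /= ?in_setU1 ?lift_edge_neq_max mem_imset //; apply: lift_edge_inj.
Qed.

Lemma mem_extend_max N o d : ((ord_max, d) \in extend_top N o) = (o == Some d).
Proof.
case: o => [d'|] /=; rewrite ?in_setU1 (negbTE (max_notin_lift _ _)) ?orbF //.
by rewrite xpair_eqE eqxx eq_sym.
Qed.

Lemma restrict_extend_top N o : restrict_top (extend_top N o) = N.
Proof. by apply/setP => e; rewrite inE mem_extend_lift. Qed.

Lemma top_partner_extend N o : top_partner (extend_top N o) = o.
Proof.
rewrite /top_partner; case: pickP => [d|none]; first by rewrite mem_extend_max => /eqP.
by case: o none => // d /(_ d); rewrite mem_extend_max eqxx.
Qed.

Lemma extend_restrict_top M : matchingb M -> extend_top (restrict_top M) (top_partner M) = M.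
Proof.
move=> /matchingP [uniqM _]; apply/setP => -[x y].
case: (unliftP ord_max x) => [x' ->|->].
  by rewrite -[(lift _ x', y)]/(lift_edge (x', y)) mem_extend_lift inE.
rewrite mem_extend_max /top_partner; case: pickP => [d dM|/(_ y) -> //].
apply/eqP/idP => [[<-] //|yM].
by have [->] := uniqM _ _ yM dM (or_introl erefl).
Qed.

Lemma top_free_extend_lift N o x : top_free (extend_top N o) (lift ord_max x) = top_free N x.
Proof.
rewrite /top_free; case: o => [d|]; rewrite ?forall_inU1 forall_in_imset /= ?neq_lift;
  by apply: eq_forallb_in => e _; rewrite (inj_eq lift_inj).
Qed.

Lemma top_free_extend_max N o : top_free (extend_top N o) ord_max = (o == None).
Proof.
rewrite /top_free; case: o => [d|] /=; rewrite ?forall_inU1 ?eqxx //.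
by rewrite forall_in_imset; apply/forall_inP => e _; rewrite lift_eqF.
Qed.

Lemma bot_free_extend N o y : bot_free (extend_top N o) y = bot_free N y && (o != Some y).
Proof.
rewrite /bot_free; case: o => [d|]; rewrite ?forall_inU1 forall_in_imset ?andbT //.
by rewrite andbC.
Qed.

Lemma card_extend_top N o : #|extend_top N o| = #|N| + (o != None).
Proof.
case: o => [d|] /=; last by rewrite (card_imset _ lift_edge_inj) addn0.
by rewrite cardsU1 max_notin_lift (card_imset _ lift_edge_inj) addnC.
Qed.

Lemma matchingb_extend N o :
  matchingb (extend_top N o) = matchingb N && (if o is Some d then bot_free N d else true).
Proof.
have mem_lift x y : ((lift ord_max x, y) \in extend_top N o) = ((x, y) \in N).
  exact: (mem_extend_lift N o (x, y)).
apply/matchingP/andP => [[uniqM freeM]|[/matchingP [uniqN freeN] free_d]].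
  split; last first.
    case: o uniqM mem_lift {freeM} => // d uniqM mem_lift; apply/forall_inP => -[x y] xyN /=.
    apply/eqP => yd; have := uniqM (lift ord_max x, y) (ord_max, d).
    rewrite mem_lift mem_extend_max eqxx => /(_ xyN isT (or_intror yd)) /(congr1 fst) /eqP.
    by rewrite lift_eqF.
  apply/matchingP; split=> [[x1 y1] [x2 y2] e1N e2N shared|[x y] xyN].
    have shared' : lift ord_max x1 = lift ord_max x2 \/ y1 = y2.
      by case: shared => /= ->; auto.
    have := uniqM (lift ord_max x1, y1) (lift ord_max x2, y2).
    by rewrite !mem_lift => /(_ e1N e2N shared') /(@lift_edge_inj (x1, y1) (x2, y2)).
  by have := freeM (lift ord_max x, y); rewrite mem_lift lift_max => ->.
have apart x y d : (x, y) \in N -> o = Some d -> ~ (lift ord_max x = ord_max \/ y = d).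
  move=> xyN od [/eqP|yd]; first by rewrite lift_eqF.
  by move: free_d; rewrite od => /forall_inP /(_ _ xyN); rewrite yd eqxx.
split=> [[x1 y1] [x2 y2]|[x y]]; last first.
  case: (unliftP ord_max x) => [x' ->|-> _]; last by rewrite /= ltnNge tn_le_T.
  by rewrite mem_lift lift_max; apply: freeN.
case: (unliftP ord_max x1) => [x1' ->|->]; case: (unliftP ord_max x2) => [x2' ->|->];
  rewrite ?mem_lift ?mem_extend_max.
- move=> e1N e2N shared; suff [-> ->] : (x1', y1) = (x2', y2) by [].
  by apply: uniqN => //; case: shared => [/lift_inj|]; auto.
- by move=> e1N /eqP o2 /(apart _ _ _ e1N o2).
- by move=> /eqP o1 e2N [|] eq12; case: (apart _ _ _ e2N o1); auto.
- by move=> /eqP -> /eqP [->].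
Qed.

Lemma big_extend_top N o (F : 'I_T.+1 * 'I_B -> nat) :
  \sum_(e in extend_top N o) F e =
  (if o is Some d then F (ord_max, d) else 0) + \sum_(e in N) F (lift_edge e).
Proof.
have lift_inj_in : {in N &, injective lift_edge} by move=> ? ? _ _ /lift_edge_inj.
case: o => [d|] /=; last by rewrite big_imset.
by rewrite big_setU1 ?max_notin_lift //= big_imset.
Qed.

Lemma cross_edges_extend N o : cross_edges (extend_top N o) =
  (if o is Some d then \sum_(e in N) (d < e.2) else 0) + cross_edges N.
Proof.
rewrite /cross_edges big_extend_top; under eq_bigr do rewrite big_extend_top.
have lifted : \sum_(e1 in N) \sum_(e2 in N)
    ((lift_edge e1).1 < (lift_edge e2).1) && ((lift_edge e2).2 < (lift_edge e1).2) =
    \sum_(e1 in N) \sum_(e2 in N) ((e1.1 < e2.1) && (e2.2 < e1.2)).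
  by apply: eq_bigr => e1 _; apply: eq_bigr => e2 _; rewrite !lift_max.
rewrite big_split lifted; case: o => [d|]; last by rewrite big1.
rewrite big1 ?add0n => [|e2 _]; last by rewrite ltnNge leq_ord.
by congr (_ + _); apply: eq_bigr => e _; rewrite lift_max ltn_ord.
Qed.

Lemma count_top_free_extend N o (z : 'I_T.+1) :
  \sum_x (top_free (extend_top N o) x && (x < z)) = \sum_(x : 'I_T) (top_free N x && (x < z)).
Proof.
rewrite (bigD1_ord ord_max) //; under eq_bigr do rewrite top_free_extend_lift lift_max.
by rewrite top_free_extend_max ltnNge leq_ord andbF.
Qed.

Lemma cross_top_extend N o : cross_top (extend_top N o) =
  (if o is Some _ then \sum_x top_free N x else 0) + cross_top N.
Proof.
have lifted : \sum_(e in N) \sum_x (top_free (extend_top N o) x && (x < (lift_edge e).1))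
              = cross_top N.
  by apply: eq_bigr => e _; rewrite count_top_free_extend; apply: eq_bigr => x _; rewrite lift_max.
rewrite {1}/cross_top big_extend_top lifted.
case: o {lifted} => [d|] //; rewrite count_top_free_extend; congr (_ + _).
by apply: eq_bigr => x _; rewrite ltn_ord andbT.
Qed.

Lemma cross_bot_extend_none N : cross_bot (extend_top N None) = cross_bot N.
Proof.
rewrite {1}/cross_bot big_extend_top add0n.
by apply: eq_bigr => e _; apply: eq_bigr => y _; rewrite bot_free_extend andbT.
Qed.

Lemma cross_bot_extend_some N d : bot_free N d ->
  cross_bot (extend_top N (Some d)) + \sum_(e in N) (d < e.2) =
  \sum_y (bot_free N y && (y < d)) + cross_bot N.
Proof.
move=> free_d; rewrite {1}/cross_bot big_extend_top.
rewrite -addnA -big_split; congr (_ + _).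
  apply: eq_bigr => y _; rewrite (bot_free_extend N (Some d) y) (inj_eq Some_inj).
  by case: (d =P y) => [->|]; rewrite ?ltnn ?andbF ?andbT.
apply: eq_bigr => e _; rewrite (bigD1 d) // [RHS](bigD1 d) //=.
rewrite (bot_free_extend N (Some d) d) free_d eqxx.
rewrite add0n addnC; congr (_ + _); apply: eq_bigr => y yd.
by rewrite (bot_free_extend N (Some d) y) (inj_eq Some_inj) eq_sym yd andbT.
Qed.

Lemma crossings_extend_none N : crossings (extend_top N None) = crossings N.
Proof. by rewrite /crossings cross_edges_extend cross_top_extend cross_bot_extend_none. Qed.

Lemma crossings_extend_some N d : matchingb N -> bot_free N d ->
  crossings (extend_top N (Some d)) =
  crossings N + (T - #|N|) + \sum_y (bot_free N y && (y < d)).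
Proof.
move=> matchN free_d; have := cross_bot_extend_some free_d.
by rewrite /crossings cross_edges_extend cross_top_extend (sum_top_free matchN); lia.
Qed.
End TopExtension.

Section QWeighted.
Local Open Scope ring_scope.
Variables (R : fieldType) (q : R).
Hypothesis q_neq1 : q != 1.

Definition qmatch T B k : R :=
  \sum_(M : {set 'I_T * 'I_B} | matchingb M && (#|M| == k)) q ^+ crossings M.

Lemma sum_extend_top_some T B k (N : {set 'I_T * 'I_B}) : (tn <= T)%N ->
  \sum_(d | matchingb (extend_top N (Some d)) && (#|extend_top N (Some d)| == k.+1))
     q ^+ crossings (extend_top N (Some d)) =
  (if matchingb N && (#|N| == k) then q ^+ crossings N else 0) * (q ^+ (T - k) * qint q (B - k)).
Proof.
move=> tn_le_T.
rewrite (eq_bigl (fun d => matchingb N && (#|N| == k) && bot_free N d)); last first.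
  by move=> d; rewrite matchingb_extend // card_extend_top addn1 eqSS andbAC.
have [/andP [matchN /eqP cardN]|_] := boolP (matchingb N && (#|N| == k)); last first.
  by rewrite big_pred0 ?mul0r.
rewrite (eq_bigl (bot_free N)) //.
under eq_bigr => d free_d do rewrite crossings_extend_some // 2!exprD.
rewrite -mulr_sumr sum_qpow_rank // cardN -sum_nat_boolE sum_bot_free // cardN.
by rewrite mulrA.
Qed.

Lemma qmatch_topS T B k : (tn <= T)%N ->
  qmatch T.+1 B k.+1 = qmatch T B k.+1 + q ^+ (T - k) * qint q (B - k) * qmatch T B k.
Proof.
move=> tn_le_T; rewrite /qmatch (reindex (fun p => extend_top p.1 p.2)) /=; last first.
  exists (fun M => (restrict_top M, top_partner M)) => [[N o] _|M /andP [matchM _]] /=.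
    by rewrite restrict_extend_top top_partner_extend.
  exact: extend_restrict_top.
rewrite big_pair_cond /=.
under eq_bigr => N _ do rewrite big_option -big_mkcond (sum_extend_top_some _ _ tn_le_T).
rewrite big_split -mulr_suml -!big_mkcond; congr (_ + _); last exact: mulrC.
apply: eq_big => [N|N _]; last by rewrite crossings_extend_none.
by rewrite matchingb_extend // card_extend_top andbT addn0.
Qed.

Lemma qmatch0 T B : qmatch T B 0 = 1.
Proof.
rewrite /qmatch (big_pred1 set0) => [|M].
  by rewrite /crossings /cross_edges /cross_top /cross_bot !big_set0.
rewrite cards_eq0 /=; case: eqP => [->|_]; rewrite ?andbF // andbT.
by apply/andP; split; apply/forall_inP => e; rewrite inE.
Qed.

Lemma qmatch_gt T B k : (B < k)%N -> qmatch T B k = 0.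
Proof.
move=> B_lt_k; rewrite /qmatch big_pred0 // => M.
by apply/negbTE/andP => -[/card_matching_le]; case: eqP => // ->; rewrite leqNgt B_lt_k.
Qed.

Lemma qmatch_all_forbidden k : qmatch tn bn k = (k == 0)%:R.
Proof.
case: k => [|k]; first exact: qmatch0.
rewrite /qmatch big_pred0 // => M; apply/negbTE/andP => -[/matchingP [_ forbidden] /eqP cardM].
suff M0 : M = set0 by rewrite M0 cards0 in cardM.
by apply/setP => e; rewrite inE; apply/negP => /forbidden; rewrite !ltn_ord.
Qed.
End QWeighted.
End Matchings.

Section Transpose.
Variables (T B : nat).
Implicit Type M : {set 'I_T * 'I_B}.

Definition transpose_edge (e : 'I_T * 'I_B) : 'I_B * 'I_T := (e.2, e.1).
Definition transpose M := transpose_edge @: M.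

Lemma transpose_edge_inj : injective transpose_edge.
Proof. by move=> [x y] [x' y'] [-> ->]. Qed.

Lemma top_free_transpose M y : top_free (transpose M) y = bot_free M y.
Proof. by rewrite /top_free forall_in_imset. Qed.

Lemma bot_free_transpose M x : bot_free (transpose M) x = top_free M x.
Proof. by rewrite /bot_free forall_in_imset. Qed.

Lemma matchingb_transpose tn bn M : matchingb bn tn (transpose M) = matchingb tn bn M.
Proof.
rewrite /matchingb !forall_in_imset /=.
under eq_forallb => e1 do rewrite forall_in_imset /=.
under eq_forallb => e1 do under eq_forallb => e2 do rewrite (inj_eq transpose_edge_inj) orbC.
by congr (_ && _); apply: eq_forallb => e; rewrite andbC.
Qed.

Lemma card_transpose M : #|transpose M| = #|M|.
Proof. exact: card_imset transpose_edge_inj. Qed.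

Lemma crossings_transpose M : crossings (transpose M) = crossings M.
Proof.
have inj_in : {in M &, injective transpose_edge} by move=> e1 e2 _ _ /transpose_edge_inj.
rewrite /crossings /cross_edges /cross_top /cross_bot !big_imset //=.
under eq_bigr => e _ do rewrite big_imset //=.
under [X in _ + X + _]eq_bigr => e _ do under eq_bigr => y _ do rewrite top_free_transpose.
under [X in _ + _ + X]eq_bigr => e _ do under eq_bigr => x _ do rewrite bot_free_transpose.
rewrite exchange_big addnAC; congr (_ + _ + _).
by apply: eq_bigr => e1 _; apply: eq_bigr => e2 _; rewrite andbC.
Qed.
End Transpose.

Lemma transposeK T B : cancel (@transpose T B) (@transpose B T).
Proof.
move=> M; rewrite /transpose -imset_comp (eq_imset (g := id)) ?imset_id //.
by move=> [x y].
Qed.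

Section QWeightedTranspose.
Local Open Scope ring_scope.
Variables (R : fieldType) (q : R).
Hypothesis q_neq1 : q != 1.

Lemma qmatch_transpose tn bn T B k : qmatch tn bn q T B k = qmatch bn tn q B T k.
Proof.
rewrite /qmatch (reindex (@transpose B T)) /=; last first.
  by exists (@transpose T B) => M _; rewrite transposeK.
by apply: eq_big => M; rewrite ?matchingb_transpose ?card_transpose ?crossings_transpose.
Qed.

Lemma qmatch_botS tn bn T B k : (bn <= B)%N ->
  qmatch tn bn q T B.+1 k.+1 =
  qmatch tn bn q T B k.+1 + q ^+ (B - k) * qint q (T - k) * qmatch tn bn q T B k.
Proof. by move=> bn_le_B; rewrite !(qmatch_transpose tn) qmatch_topS. Qed.
End QWeightedTranspose.

Lemma top_lbl_lt a j (x y : nat) : (top_lbl a j x < top_lbl a j y)%R = (x < y).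
Proof. by rewrite /top_lbl; case: ifP => ?; case: ifP => ?; lia. Qed.

Lemma bot_lbl_lt j (x y : nat) : (bot_lbl j x < bot_lbl j y)%R = (x < y).
Proof. by rewrite /bot_lbl; case: ifP => ?; case: ifP => ?; lia. Qed.

Lemma top_lbl_neg a j (x : nat) : (top_lbl a j x < 0)%R = (x < a + j).
Proof. by rewrite /top_lbl; case: ifP => ?; lia. Qed.

Lemma bot_lbl_neg j (x : nat) : (bot_lbl j x < 0)%R = (x < j).
Proof. by rewrite /bot_lbl; case: ifP => ?; lia. Qed.

Lemma card_set_pair (X Y : finType) (P : pred (X * Y)) :
  #|[set p | P p]| = \sum_x \sum_y P (x, y).
Proof.
rewrite pair_bigA -sum1_card big_mkcond; apply: eq_bigr => -[x y] _.
by rewrite inE /=; case: P.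
Qed.

Lemma matching_sumE (R : fieldType) (q : R) a n j m :
  matching_sum a n j q m = qmatch (a + j) j q (a + j + n) (j + n) m.
Proof.
apply: eq_big => [M|M _].
  rewrite /is_matching /matchingb; congr (_ && _ && _); apply: eq_forallb => e.
  by rewrite /top_neg /bot_neg top_lbl_neg bot_lbl_neg.
congr (_ ^+ _)%R; rewrite /crossing /crossings /cr1 /cr2 /cr3.
congr (_ + _ + _); rewrite card_set_pair [RHS]big_mkcond; apply: eq_bigr => e _ /=;
  case: (e \in M) => /=; try by rewrite big1.
- rewrite [RHS]big_mkcond; apply: eq_bigr => e' _ /=.
  by case: (e' \in M); rewrite //= top_lbl_lt bot_lbl_lt.
- by apply: eq_bigr => x _; rewrite top_lbl_lt.
- by apply: eq_bigr => y _; rewrite bot_lbl_lt.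
Qed.

Section MatchingMotzkin.
Local Open Scope ring_scope.
Variables (R : fieldType) (q : R) (alpha j : nat).
Hypothesis q_neq1 : q != 1.

Definition qb n := q ^+ n * qint q (n + alpha + 1) + q ^+ (n + alpha) * qint q n.
Definition qlam n := q ^ ((2 * n + alpha)%N%:Z - 1) * qint q n * qint q (n + alpha).

Lemma qlamS l :
  qlam l.+1 = q ^+ l * qint q (l + alpha + 1) * (q ^+ (l + alpha + 1) * qint q l.+1).
Proof.
rewrite /qlam (_ : _ - 1 = (l + (l + alpha + 1))%N :> int); last by lia.
rewrite -[q ^ _]/(q ^+ (l + (l + alpha + 1))) exprD (_ : (l.+1 + alpha = l + alpha + 1)%N).
  by ring.
by lia.
Qed.

Lemma qmatch_motzkin n m : (m <= j + n)%N ->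
  qmatch (alpha + j) j q (alpha + j + n) (j + n) m = motzkin qb qlam n j (j + n - m)%N.
Proof.
elim: n m => [|n IHn] m m_le.
  by rewrite !addn0 qmatch_all_forbidden /=; congr (nat_of_bool _)%:R; apply/eqP/eqP; lia.
have top_full : motzkin qb qlam n j (j + n) = 1.
  by rewrite -[X in motzkin _ _ _ _ X]subn0 -IHn ?qmatch0.
rewrite !addnS; case: m m_le => [|m] m_le.
  by rewrite qmatch0 subn0 motzkinSr top_full !motzkin_out_of_reach ?mulr0 ?addr0 //; lia.
have one_more_edge : qmatch (alpha + j) j q (alpha + j + n) (j + n) m.+1 =
    if (0 < j + n - m)%N then motzkin qb qlam n j (j + n - m).-1 else 0.
  case: (posnP (j + n - m)) => [l0|l_pos]; first by rewrite qmatch_gt //; lia.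
  by rewrite IHn; [congr (motzkin _ _ _ _ _); lia | lia].
have new_top : qmatch (alpha + j) j q (alpha + j + n).+1 (j + n) m =
    motzkin qb qlam n j (j + n - m) +
    q ^+ (j + n - m + alpha + 1) * qint q (j + n - m).+1 * motzkin qb qlam n j (j + n - m).+1.
  case: m m_le {one_more_edge} => [|m] m_le.
    by rewrite qmatch0 subn0 top_full motzkin_out_of_reach ?mulr0 ?addr0 //; lia.
  rewrite qmatch_topS ?leq_addr // IHn; last by lia.
  rewrite IHn; last by lia.
  have -> : (j + n - m = (j + n - m.+1).+1)%N by lia.
  by rewrite (_ : (alpha + j + n - m = j + n - m.+1 + alpha + 1)%N); last lia.
rewrite subSS qmatch_botS ?qmatch_topS ?leq_addr // one_more_edge new_top IHn; last by lia.
rewrite (_ : (alpha + j + n - m = j + n - m + alpha)%N); last by lia.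
rewrite (_ : ((alpha + j + n).+1 - m = j + n - m + alpha + 1)%N); last by lia.
by rewrite motzkinSr qlamS [qb _]/qb; ring.
Qed.
End MatchingMotzkin.

Local Open Scope ring_scope.

Theorem proposition2p4 (R : realFieldType) (q : R) (hq0 : 0 < q) (hq1 : q < 1)
  (alpha p j : nat) :
  let b := fun n : nat => q ^+ n * qint q (n + alpha + 1) + q ^+ (n + alpha) * qint q n in
  let lam := fun n : nat =>
    q ^ ((2 * n + alpha)%N%:Z - 1) * qint q n * qint q (n + alpha) in
  motzkin_sum b lam p j j = matching_sum alpha p j q p.
Proof.
move=> b lam; have q_neq1 : q != 1 by rewrite lt_eqF.
by rewrite motzkin_sumE matching_sumE qmatch_motzkin ?leq_addl // addnK.
Qed.
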